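(* Let $n_1,n_2,d_1,d_2$ be positive integers with $1\le d_\iota\le n_\iota-1$ for $\iota=1,2$. If $\frac{d_1}{n_1}=\frac{d_2}{n_2}$ and $\binom{n_1}{d_1}=\binom{n_2}{d_2}$, then $n_1=n_2$ and $d_1=d_2$. *)

From mathcomp Require Import all_boot all_order all_algebra.

From mathcomp Require Import all_boot all_order all_algebra.
From mathcomp Require Import zify.
Import GRing.Theory Num.Theory.

(* Write n = d + e.  With d/n fixed, a larger n forces both a larger d and a
   larger e = n - d.  The binomial coefficient 'C(d + e, d) is nondecreasing in
   e (Pascal's rule) and strictly increasing in d as soon as e >= 1, since
   'C(d.+1 + e, d.+1) = 'C(d + e, d) + 'C(d + e, d.+1) with a positive second
   summand.  Hence distinct n with the same ratio d/n give distinct binomials. *)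

Lemma ltn_bin_addSl d e : (0 < e)%N -> ('C(d + e, d) < 'C(d.+1 + e, d.+1))%N.
Proof.
move=> e_gt0; rewrite addSn binS -{1}['C(d + e, d)]add0n ltn_add2r.
by rewrite bin_gt0 -addn1 leq_add2l.
Qed.

Lemma ltn_bin_addl {d d' e : nat} :
  (0 < e)%N -> (d < d')%N -> ('C(d + e, d) < 'C(d' + e, d'))%N.
Proof.
move=> e_gt0; apply: (homo_ltn (f := fun d => 'C(d + e, d)) ltn_trans) => i.
exact: ltn_bin_addSl.
Qed.

Lemma ltn_bin_same_ratio {n1 n2 d1 d2 : nat} :
  (0 < d1 < n1)%N -> (0 < d2 < n2)%N ->
  (d1 * n2 = d2 * n1)%N -> (n1 < n2)%N -> ('C(n1, d1) < 'C(n2, d2))%N.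
Proof.
move=> /andP[d1_gt0 d1_lt] /andP[d2_gt0 d2_lt] ratio lt_n12.
have lt_d12 : (d1 < d2)%N by nia.
have le_e12 : (n1 - d1 <= n2 - d2)%N by nia.
have e1_gt0 : (0 < n1 - d1)%N by rewrite subn_gt0.
rewrite -(subnKC (ltnW d1_lt)) -(subnKC (ltnW d2_lt)).
apply: leq_trans (ltn_bin_addl e1_gt0 lt_d12) _.
by rewrite leq_bin2l // leq_add2l.
Qed.

Theorem lemma2p8 (n1 n2 d1 d2 : nat) :
  (1 <= d1 <= n1.-1)%N -> (1 <= d2 <= n2.-1)%N ->
  ((d1%:R / n1%:R : rat) = d2%:R / n2%:R)%R ->
  'C(n1, d1) = 'C(n2, d2) ->
  n1 = n2 /\ d1 = d2.
Proof.
move=> h1 h2 ratio bin_eq.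
have d1_lt : (0 < d1 < n1)%N by lia.
have d2_lt : (0 < d2 < n2)%N by lia.
have [n1_gt0 n2_gt0] : (0 < n1)%N /\ (0 < n2)%N by lia.
have cross : (d1 * n2 = d2 * n1)%N.
  by move/eqP: ratio; rewrite eqr_div ?pnatr_eq0 -?lt0n // -!natrM eqr_nat => /eqP.
have [lt_n12|lt_n21|eq_n12] := ltngtP n1 n2.
- by have := ltn_bin_same_ratio d1_lt d2_lt cross lt_n12; rewrite bin_eq ltnn.
- by have := ltn_bin_same_ratio d2_lt d1_lt (esym cross) lt_n21; rewrite bin_eq ltnn.
- by subst n2; split => //; nia.
Qed.
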